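(* If $A$ is a coherent $\mathbb{Z}$-algebra, then the sequence $(P_i)_{i\in\mathbb{Z}}$ in the abelian category $\operatorname{coh}A$ is a coherent sequence.
   Context: $k$ is a fixed field. A $\mathbb{Z}$-algebra is an associative $k$-algebra $A=\bigoplus_{i\le j}A_{ij}$ with $A_{ii}=k$, only nonzero products $A_{jk}\otimes A_{ij}\to A_{ik}$, units acting as identity, $\dim A_{ij}<\infty$. An $A$-module is a graded right module $M=\bigoplus_iM_i$ with action $M_j\otimes A_{ij}\to M_i$. $P_j=\bigoplus_iA_{ij}$; $S_j$ is $k$ in degree $j$ and $0$ elsewhere; $\mathcal{P}$ = finite direct sums of $P_j$'s. $M$ is finitely generated if a quotient of some $P\in\mathcal{P}$; coherent if finitely generated and every kernel of a map $P\to M$, $P\in\mathcal{P}$, is finitely generated. $\operatorname{coh}A$ is the (abelian) full subcategory of coherent modules. $A$ is coherent if all $P_j$, $S_j$ are coherent. For a sequence $(E_i)$ in an abelian $k$-linear category $\mathcal{C}$ (with $\dim\operatorname{Hom}(E_i,X)<\infty$ for all $X$): it is projective if for every surjection $X\to Y$ there is $n$ such that $\operatorname{Hom}(E_i,X)\to\operatorname{Hom}(E_i,Y)$ is surjective for $i<n$; a projective sequence is coherent if for every $X\in\mathcal{C}$ and $m\in\mathbb{Z}$ there are $i_1,\dots,i_s\le m$ such that $\bigoplus_j\operatorname{Hom}(E_{i_j},X)\otimes\operatorname{Hom}(E_i,E_{i_j})\to\operatorname{Hom}(E_i,X)$ is surjective for $i\ll0$. *)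

From HB Require Import structures.
From mathcomp Require Import all_boot all_order all_algebra.
Set Implicit Arguments. Unset Strict Implicit. Unset Printing Implicit Defensive.
Import Order.TTheory GRing.Theory Num.Theory.
Local Open Scope ring_scope.

(* A Z-algebra is given by its components A_ij (finite-dimensional     *)
(* k-vector spaces, as vectType), the products A_jl (x) A_ij -> A_il   *)
(* and the units 1_i in A_ii.  Components with i > j are required to   *)
(* vanish (A = (+)_{i<=j} A_ij).                                       *)

Record zalg (k : fieldType) := ZAlg {
  zcomp : int -> int -> vectType k;
  zmul : forall i j l : int, zcomp j l -> zcomp i j -> zcomp i l;
  zone : forall i : int, zcomp i i }.

Section ZAlgDefs.
Variable k : fieldType.
Variable A : zalg k.

Local Notation Acomp := (zcomp A).
Local Notation mul := (@zmul _ A).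

Definition is_zalg : Prop :=
  [/\
      (forall (i j : int) (a : Acomp i j), (j < i)%R -> a = 0),
      (forall i : int, \dim (fullv : {vspace Acomp i i}) = 1%N),
      (forall (i j l : int) (c : k) (a a' : Acomp j l) (b : Acomp i j),
          mul (c *: a + a') b = c *: mul a b + mul a' b),
      (forall (i j l : int) (c : k) (a : Acomp j l) (b b' : Acomp i j),
          mul a (c *: b + b') = c *: mul a b + mul a b') &
      (forall (i j l m : int) (a : Acomp l m) (b : Acomp j l) (c : Acomp i j),
          mul (mul a b) c = mul a (mul b c)) /\
      (forall (i j : int) (a : Acomp i j),
          mul (zone A j) a = a /\ mul a (zone A i) = a)].

(* Graded right A-modules M = (+)_i M_i with action M_j (x) A_ij -> M_i. *)
Record gmod := GMod {
  gcar : int -> lmodType k;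
  gact : forall i j : int, gcar j -> Acomp i j -> gcar i }.

Definition is_gmod (M : gmod) : Prop :=
  [/\ (forall (i j : int) (c : k) (m m' : gcar M j) (a : Acomp i j),
          gact (c *: m + m') a = c *: gact m a + gact m' a),
      (forall (i j : int) (c : k) (m : gcar M j) (a a' : Acomp i j),
          gact m (c *: a + a') = c *: gact m a + gact m a'),
      (forall (i j l : int) (m : gcar M l) (a : Acomp j l) (b : Acomp i j),
          gact (gact m a) b = gact m (mul a b)) &
      (forall (i : int) (m : gcar M i), gact m (zone A i) = m)].

Definition is_hom (M N : gmod) (f : forall i : int, gcar M i -> gcar N i) : Prop :=
  (forall (i : int) (c : k) (x y : gcar M i), f i (c *: x + y) = c *: f i x + f i y)
  /\ (forall (i j : int) (m : gcar M j) (a : Acomp i j),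
        f i (gact m a) = gact (f j m) a).

Arguments is_hom : clear implicits.

Definition Pmod (j : int) : gmod :=
  @GMod (fun i => (Acomp i j : lmodType k))
        (fun i i' (m : Acomp i' j) (a : Acomp i i') => mul m a).

(* A morphism (+)_{t<s} P_{js t} -> M is given (universal property of   *)
(* the finite direct sum) by a family of morphisms P_{js t} -> M.        *)
Definition sum_hom (M : gmod) (s : nat) (js : 'I_s -> int)
    (f : forall (t : 'I_s) (i : int), Acomp i (js t) -> gcar M i) : Prop :=
  forall t : 'I_s, is_hom (Pmod (js t)) M (@f t).

Definition sum_surj (M : gmod) (s : nat) (js : 'I_s -> int)
    (f : forall (t : 'I_s) (i : int), Acomp i (js t) -> gcar M i) : Prop :=
  forall (i : int) (m : gcar M i),
    exists a : forall t : 'I_s, Acomp i (js t), m = \sum_(t < s) f t i (a t).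

Definition fin_gen (M : gmod) : Prop :=
  exists (s : nat) (js : 'I_s -> int)
         (f : forall (t : 'I_s) (i : int), Acomp i (js t) -> gcar M i),
    sum_hom f /\ sum_surj f.

(* The kernel of the morphism f : P := (+)_{t<s} P_{js t} -> M is finitely *)
(* generated: there are P' = (+)_{u<s'} P_{es u} and a morphism            *)
(* g : P' -> P (given by its matrix components g u t : P_{es u} ->         *)
(* P_{js t}) whose image is exactly ker f.                                 *)
Definition ker_fin_gen (M : gmod) (s : nat) (js : 'I_s -> int)
    (f : forall (t : 'I_s) (i : int), Acomp i (js t) -> gcar M i) : Prop :=
  exists (s' : nat) (es : 'I_s' -> int)
         (g : forall (u : 'I_s') (t : 'I_s) (i : int),
                Acomp i (es u) -> Acomp i (js t)),
    [/\ (forall (u : 'I_s') (t : 'I_s), is_hom (Pmod (es u)) (Pmod (js t)) (g u t)),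
        (forall (u : 'I_s') (i : int) (b : Acomp i (es u)),
            \sum_(t < s) f t i (g u t i b) = 0) &
        (forall (i : int) (a : forall t : 'I_s, Acomp i (js t)),
            \sum_(t < s) f t i (a t) = 0 ->
            exists b : forall u : 'I_s', Acomp i (es u),
              forall t : 'I_s, a t = \sum_(u < s') g u t i (b u))].

Definition coherent_mod (M : gmod) : Prop :=
  fin_gen M /\
  forall (s : nat) (js : 'I_s -> int)
         (f : forall (t : 'I_s) (i : int), Acomp i (js t) -> gcar M i),
    sum_hom f -> ker_fin_gen f.

(* M is (a copy of) S_j: k in degree j and 0 elsewhere.  The module     *)
(* structure of such an M is forced by the module axioms.               *)
Definition is_S (j : int) (M : gmod) : Prop :=
  (exists v : gcar M j, v != 0 /\ forall x : gcar M j, exists c : k, x = c *: v)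
  /\ (forall (i : int) (x : gcar M i), i != j -> x = 0).

Definition coherent_zalg : Prop :=
  (forall j : int, coherent_mod (Pmod j)) /\
  (forall (j : int) (S : gmod), is_gmod S -> is_S j S -> coherent_mod S).

Definition in_coh (M : gmod) : Prop := is_gmod M /\ coherent_mod M.

Definition P_projective_seq : Prop :=
  forall (X Y : gmod) (p : forall i : int, gcar X i -> gcar Y i),
    in_coh X -> in_coh Y -> is_hom X Y p ->
    (forall (i : int) (y : gcar Y i), exists x : gcar X i, p i x = y) ->
    exists n : int, forall i : int, (i < n)%R ->
      forall h : forall d : int, Acomp d i -> gcar Y d,
        is_hom (Pmod i) Y h ->
        exists g : forall d : int, Acomp d i -> gcar X d,
          is_hom (Pmod i) X g /\
          forall (d : int) (x : Acomp d i), p d (g d x) = h d x.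

(* The sequence (P_i) is a coherent sequence in coh A.  Surjectivity of *)
(* (+)_t Hom(P_{is t}, X) (x) Hom(P_i, P_{is t}) -> Hom(P_i, X) means     *)
(* that every h is a finite sum of composites phi o psi.                  *)
Definition P_coherent_seq : Prop :=
  P_projective_seq /\
  forall (X : gmod) (m : int), in_coh X ->
    exists (s : nat) (ix : 'I_s -> int),
      (forall t : 'I_s, (ix t <= m)%R) /\
      exists n : int, forall i : int, (i < n)%R ->
        forall h : forall d : int, Acomp d i -> gcar X d,
          is_hom (Pmod i) X h ->
          exists (r : 'I_s -> nat)
                 (phi : forall (t : 'I_s) (u : 'I_(r t)) (d : int),
                          Acomp d (ix t) -> gcar X d)
                 (psi : forall (t : 'I_s) (u : 'I_(r t)) (d : int),
                          Acomp d i -> Acomp d (ix t)),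
            [/\ (forall t u, is_hom (Pmod (ix t)) X (phi t u)),
                (forall t u, is_hom (Pmod i) (Pmod (ix t)) (psi t u)) &
                (forall (d : int) (x : Acomp d i),
                    h d x = \sum_(t < s) \sum_(u < r t) phi t u d (psi t u d x))].

End ZAlgDefs.

From mathcomp Require Import all_boot all_order all_algebra.
From mathcomp Require Import zify.
From Stdlib Require Import ClassicalEpsilon.
Set Implicit Arguments. Unset Strict Implicit. Unset Printing Implicit Defensive.
Import Order.TTheory GRing.Theory Num.Theory.
Local Open Scope ring_scope.

(* Since Hom(P_i, X) = X_i, projectivity of (P_i) is surjectivity degreewise,
   and its coherence asks for finitely many elements g_v of X of degree <= m
   such that every x in X_i, i <= m, is a sum of products g_v a_v.  For X = P_q
   this goes by induction on q - m: coherence of S_q makes the kernel of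
   P_q -> S_q finitely generated, necessarily by elements of degree < q, and
   composing them with the generators obtained for those smaller degrees closes
   the induction.  A coherent X is a quotient of finitely many P_q. *)

Lemma dep_choice (I : Type) (T : I -> Type) (P : forall i, T i -> Prop) :
  (forall i, exists x, P i x) -> exists f : forall i, T i, forall i, P i (f i).
Proof.
move=> H; exists (fun i => proj1_sig (constructive_indefinite_description _ (H i))).
by move=> i; exact: proj2_sig.
Qed.

Section LinearMaps.
Variables (k : fieldType) (U V : lmodType k) (F : U -> V).
Hypothesis linF : linear F.

Lemma lin_mapD : {morph F : x y / x + y}.
Proof. by move=> x y; have := linF 1 x y; rewrite !scale1r. Qed.

Lemma lin_map0 : F 0 = 0.
Proof. by apply: (addIr (F 0)); rewrite -lin_mapD !add0r. Qed.

Lemma lin_map_sum (I : Type) (r : seq I) (P : pred I) (G : I -> U) :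
  F (\sum_(i <- r | P i) G i) = \sum_(i <- r | P i) F (G i).
Proof. exact: (big_morph F lin_mapD lin_map0). Qed.

End LinearMaps.

Lemma bool_ord_true (b : bool) (t : 'I_b) : b.
Proof. by case: b t => // -[]. Qed.

Lemma bool_ord_eq (b : bool) (s t : 'I_b) : s = t.
Proof. by apply/val_inj; case: b s t => -[[|?] ?] [[|?] ?]. Qed.

Lemma sum_bool_ord (V : nmodType) (b : bool) (F : 'I_b -> V) (t : 'I_b) :
  \sum_s F s = F t.
Proof. by rewrite (big_pred1 t) // => s; rewrite (bool_ord_eq s t) /= eqxx. Qed.

Lemma sum_bool_ord0 (V : nmodType) (b : bool) (F : 'I_b -> V) :
  ~~ b -> \sum_s F s = 0.
Proof. by move=> nb; apply: big1 => s _; case/negP: nb; exact: bool_ord_true s. Qed.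

Section ZAlgebra.
Variables (k : fieldType) (A : zalg k).
Hypothesis zalgA : is_zalg A.
Local Notation Ac := (zcomp A).
Local Notation mul := (@zmul _ A).
Local Notation one := (zone A).

Lemma zcomp_vanish i j (a : Ac i j) : j < i -> a = 0.
Proof. by case: zalgA => H _ _ _ _; exact: H. Qed.

Lemma zmul_linear_l i j l (b : Ac i j) : linear (fun a : Ac j l => mul a b).
Proof. by case: zalgA => _ _ H _ _ c a a'; exact: H. Qed.

Lemma zmul_linear_r i j l (a : Ac j l) : linear (fun b : Ac i j => mul a b).
Proof. by case: zalgA => _ _ _ H _ c b b'; exact: H. Qed.

Lemma zmulA i j l n (a : Ac l n) (b : Ac j l) (c : Ac i j) :
  mul (mul a b) c = mul a (mul b c).
Proof. by case: zalgA => _ _ _ _ [H _]; exact: H. Qed.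

Lemma zmul1l i j (a : Ac i j) : mul (one j) a = a.
Proof. by case: zalgA => _ _ _ _ [_ H]; case: (H i j a). Qed.

Lemma zmul1r i j (a : Ac i j) : mul a (one i) = a.
Proof. by case: zalgA => _ _ _ _ [_ H]; case: (H i j a). Qed.

Lemma zmul0l i j l (b : Ac i j) : mul (0 : Ac j l) b = 0.
Proof. exact: lin_map0 (zmul_linear_l b). Qed.

Lemma zmul0r i j l (a : Ac j l) : mul a (0 : Ac i j) = 0.
Proof. exact: lin_map0 (zmul_linear_r a). Qed.

Lemma zmul_roundtrip0 i j (a : Ac j i) (b : Ac i j) : i != j -> mul a b = 0.
Proof.
case: (ltgtP i j) => // [ij|ji] _; first by rewrite (zcomp_vanish a ij) zmul0l.
by rewrite (zcomp_vanish b ji) zmul0r.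
Qed.

Lemma zone_neq0 q : one q != 0.
Proof.
apply/eqP => one0; case: zalgA => _ dim1 _ _ _; move: (dim1 q).
suff -> : (fullv : {vspace Ac q q}) = 0%VS by rewrite dimv0.
by apply/vspaceP => x; rewrite memvf memv0 -(zmul1r x) one0 zmul0r eqxx.
Qed.

Lemma zdiag_scaled_one q (x : Ac q q) : exists c : k, x = c *: one q.
Proof.
have line_full : (<[one q]> = fullv)%VS.
  case: zalgA => _ dim1 _ _ _; apply/eqP.
  by rewrite eqEdim subvf dim_vline zone_neq0 dim1.
have : x \in <[one q]>%VS by rewrite line_full memvf.
by case/vlineP => c ->; exists c.
Qed.

Lemma Pmod_gmod j : is_gmod (Pmod A j).
Proof.
split=> /=.
- by move=> i l c m m' a; exact: zmul_linear_l.
- by move=> i l c m a a'; exact: zmul_linear_r.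
- by move=> i l n m a b; rewrite zmulA.
- by move=> i m; rewrite zmul1r.
Qed.

Section Modules.
Variable M : gmod A.
Hypothesis gmodM : is_gmod M.

Lemma gact_linear_l i j (a : Ac i j) : linear (fun m : gcar M j => gact m a).
Proof. by case: gmodM => H _ _ _ c m m'; exact: H. Qed.

Lemma gact_linear_r i j (m : gcar M j) : linear (fun a : Ac i j => gact m a).
Proof. by case: gmodM => _ H _ _ c a a'; exact: H. Qed.

Lemma gactA i j l (m : gcar M l) (a : Ac j l) (b : Ac i j) :
  gact (gact m a) b = gact m (mul a b).
Proof. by case: gmodM => _ _ H _; exact: H. Qed.

Lemma gact_hom i (m : gcar M i) : @is_hom _ _ (Pmod A i) M (fun d a => gact m a).
Proof. by split=> [d|d j a b] /=; [exact: gact_linear_r | rewrite gactA]. Qed.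

End Modules.

Lemma hom_from_P_gact (M : gmod A) i (h : forall d, Ac d i -> gcar M d) :
  @is_hom _ _ (Pmod A i) M h -> forall d (x : Ac d i), h d x = gact (h i (one i)) x.
Proof. by case=> _ hact d x; rewrite -hact /= zmul1l. Qed.

Lemma P_projective : P_projective_seq A.
Proof.
move=> X Y p [gmodX _] _ [_ p_act] p_surj; exists 0 => i _ h h_hom.
have [x px] := p_surj i (h i (one i)).
exists (fun d a => gact x a); split; first exact: gact_hom.
by move=> d a; rewrite p_act px -(hom_from_P_gact h_hom).
Qed.

(* S_q is realised inside P_q: its degree-i component is A_iq indexed by
   'I_(i == q), which is a singleton exactly when i = q and empty otherwise. *)
Definition Scar (q i : int) : lmodType k := {ffun 'I_(i == q) -> Ac i q}.

Definition Sact q i j (m : Scar q j) (a : Ac i j) : Scar q i :=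
  [ffun _ => \sum_(s : 'I_(j == q)) mul (m s) a].

Definition Smod q : gmod A := GMod (@Sact q).

Lemma Smod_gmod q : is_gmod (Smod q).
Proof.
split=> /=.
- move=> i j c m m' a; apply/ffunP => t; rewrite !ffunE scaler_sumr -big_split.
  by apply: eq_bigr => s _; rewrite !ffunE zmul_linear_l.
- move=> i j c m a a'; apply/ffunP => t; rewrite !ffunE scaler_sumr -big_split.
  by apply: eq_bigr => s _; rewrite zmul_linear_r.
- move=> i j l m a b; apply/ffunP => t; rewrite !ffunE.
  case/orP: (orbN (j == q)) => [jq|njq].
    have s0 : 'I_(j == q) by apply: (@Ordinal _ 0); rewrite jq.
    rewrite (sum_bool_ord _ s0) ffunE (lin_map_sum (zmul_linear_l b)).
    by apply: eq_bigr => s _; rewrite zmulA.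
  rewrite sum_bool_ord0 //; symmetry; apply: big1 => s _.
  have /eqP iq := bool_ord_true t; have /eqP lq := bool_ord_true s; subst i l.
  by rewrite (zmul_roundtrip0 a b) ?zmul0r // eq_sym.
- by move=> i m; apply/ffunP => t; rewrite ffunE (sum_bool_ord _ t) zmul1r.
Qed.

Lemma Smod_is_S q : is_S q (Smod q).
Proof.
have t0 : 'I_(q == q) by apply: (@Ordinal _ 0); rewrite eqxx.
split; last first.
  by move=> i x iq; apply/ffunP => t; case/negP: iq; exact: bool_ord_true t.
exists [ffun _ => one q]; split.
  by apply/eqP => /ffunP/(_ t0); rewrite !ffunE; apply/eqP; exact: zone_neq0.
move=> x; have [c xc] := zdiag_scaled_one (x t0); exists c.
by apply/ffunP => t; rewrite !ffunE (bool_ord_eq t t0).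
Qed.

Definition Sproj q (t : 'I_1) i (a : Ac i q) : gcar (Smod q) i := [ffun _ => a].

Lemma Sproj_hom q : sum_hom (js := fun _ => q) (@Sproj q).
Proof.
move=> t; split=> [i c x y|i j m a]; apply/ffunP => s; rewrite !ffunE //=.
have /eqP iq := bool_ord_true s; subst i.
case/orP: (orbN (j == q)) => [jq|njq]; last first.
  by rewrite sum_bool_ord0 // zmul_roundtrip0 // eq_sym.
have s0 : 'I_(j == q) by apply: (@Ordinal _ 0); rewrite jq.
by rewrite (sum_bool_ord _ s0) ffunE.
Qed.

Record family (M : gmod A) := Family {
  fam_idx : finType;
  fam_deg : fam_idx -> int;
  fam_elt : forall v, gcar M (fam_deg v) }.
#[global] Arguments fam_deg {M} f v.
#[global] Arguments fam_elt {M} f v.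

Definition spans M (F : family M) i (x : gcar M i) : Prop :=
  exists b : forall v, Ac i (fam_deg F v), x = \sum_v gact (fam_elt F v) (b v).

Definition gen_below M (m : int) (F : family M) : Prop :=
  (forall v, fam_deg F v <= m) /\ forall i, i <= m -> forall x : gcar M i, spans F x.

Definition fam_comp M (G : family M) (F : forall u, family (Pmod A (fam_deg G u))) :
    family M :=
  @Family M {u : fam_idx G & fam_idx (F u)} (fun w => fam_deg (F (tag w)) (tagged w))
    (fun w => gact (fam_elt G (tag w)) (fam_elt (F (tag w)) (tagged w))).

Definition unit_family q : family (Pmod A q) :=
  @Family (Pmod A q) 'I_1 (fun _ => q) (fun _ => one q).

Section Families.
Variable M : gmod A.
Hypothesis gmodM : is_gmod M.

Lemma spans_comp (G : family M) (F : forall u, family (Pmod A (fam_deg G u)))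
    i (x : gcar M i) (b : forall u, Ac i (fam_deg G u)) :
  x = \sum_u gact (fam_elt G u) (b u) -> (forall u, spans (F u) (b u)) ->
  spans (fam_comp F) x.
Proof.
move=> xb /dep_choice[c bc]; exists (fun w => c (tag w) (tagged w)).
rewrite xb -(sig_big_dep xpredT (fun _ => xpredT)
  (fun u v => gact (gact (fam_elt G u) (fam_elt (F u) v)) (c u v))) /=.
apply: eq_bigr => u _; rewrite bc (lin_map_sum (gact_linear_r gmodM _)).
by apply: eq_bigr => v _; rewrite gactA.
Qed.

Lemma gen_below_comp m (G : family M) (F : forall u, family (Pmod A (fam_deg G u))) :
  (forall u, gen_below m (F u)) ->
  (forall i, i <= m -> forall x : gcar M i, spans G x) -> gen_below m (fam_comp F).
Proof.
move=> Fgen Gspan; split=> [w|i im x]; first exact: (Fgen (tag w)).1.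
have [b xb] := Gspan i im x; apply: spans_comp xb _ => u; exact: (Fgen u).2.
Qed.

Lemma fin_gen_spans :
  fin_gen M -> exists G : family M, forall i (x : gcar M i), spans G x.
Proof.
case=> s [js [f [f_hom f_surj]]].
exists (@Family M 'I_s js (fun t => f t (js t) (one (js t)))) => i x.
have [a xa] := f_surj i x; exists a; rewrite xa; apply: eq_bigr => t _.
exact: hom_from_P_gact (f_hom t) i (a t).
Qed.

Lemma hom_from_P_factor i (h : forall d, Ac d i -> gcar M d) (F : family M) :
  @is_hom _ _ (Pmod A i) M h -> spans F (h i (one i)) ->
  exists c : forall v, Ac i (fam_deg F v),
    forall d (x : Ac d i), h d x = \sum_v gact (fam_elt F v) (mul (c v) x).
Proof.
move=> h_hom [c hc]; exists c => d x.
rewrite (hom_from_P_gact h_hom) hc (lin_map_sum (gact_linear_l gmodM x)).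
by apply: eq_bigr => v _; rewrite gactA.
Qed.

End Families.

Lemma gen_below_unit m q : q <= m -> gen_below m (unit_family q).
Proof.
by move=> qm; split=> // i _ x; exists (fun _ => x); rewrite big_ord1 /= zmul1l.
Qed.

Hypothesis cohA : coherent_zalg A.

Lemma Pmod_radical_fin_gen q : exists G : family (Pmod A q),
  (forall v, fam_deg G v < q) /\ forall i, i < q -> forall x : Ac i q, spans G x.
Proof.
have [_ /(_ q _ (Smod_gmod q) (Smod_is_S q))[_ ker_fg]] := cohA.
have [s [es [g [g_hom g_ker g_onto]]]] := ker_fg 1%N _ _ (Sproj_hom q).
pose e u : Ac (es u) q := g u ord0 (es u) (one (es u)).
have g_mul u i (b : Ac i (es u)) : g u ord0 i b = mul (e u) b.
  exact: hom_from_P_gact (g_hom u ord0) i b.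
have e0 u : q <= es u -> e u = 0.
  rewrite le_eqVlt => /orP[/eqP qe|]; last exact: zcomp_vanish.
  have := g_ker u (es u) (one (es u)); rewrite big_ord1 => /ffunP.
  have t0 : 'I_(es u == q) by apply: (@Ordinal _ 0); rewrite qe eqxx.
  by move=> /(_ t0); rewrite !ffunE.
pose low := [pred u | es u < q].
exists (@Family (Pmod A q) {u in low} (fun w => es (val w)) (fun w => e (val w))).
split=> [w|i iq x]; first exact: (valP w).
have [|b xb] := g_onto i (fun _ => x).
  by apply/ffunP => t; have /eqP qi := bool_ord_true t; rewrite qi ltxx in iq.
exists (fun w => b (val w)); rewrite (xb ord0) /=.
rewrite -(big_sub low (fun u => mul (e u) (b u))) [RHS]big_mkcond /=.
apply: eq_bigr => u _; rewrite g_mul inE.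
by case: ltP => // qu; rewrite e0 // zmul0l.
Qed.

Lemma Pmod_gen_below m q : exists F : family (Pmod A q), gen_below m F.
Proof.
have [N] : exists N : nat, q - m <= N%:Z by exists `|q - m|%N; lia.
elim: N q => [|N IH] q qmN.
  by exists (unit_family q); apply: gen_below_unit; lia.
have [qm|mq] := leP q m; first by exists (unit_family q); exact: gen_below_unit.
have [G [Gdeg Gspan]] := Pmod_radical_fin_gen q.
have /dep_choice[F Fgen] :
    forall u, exists F : family (Pmod A (fam_deg G u)), gen_below m F.
  by move=> u; apply: IH; have := Gdeg u; lia.
exists (fam_comp F); apply: (gen_below_comp (Pmod_gmod q) Fgen) => i im.
exact/Gspan/(le_lt_trans im mq).
Qed.

Lemma fin_gen_gen_below M m :
  is_gmod M -> fin_gen M -> exists F : family M, gen_below m F.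
Proof.
move=> gmodM /fin_gen_spans[G Gspan].
have [F Fgen] := dep_choice (fun u => Pmod_gen_below m (fam_deg G u)).
by exists (fam_comp F); apply: (gen_below_comp gmodM Fgen) => i _; exact: Gspan.
Qed.

End ZAlgebra.

Theorem corollary2p5 (k : fieldType) (A : zalg k) :
  is_zalg A -> coherent_zalg A -> P_coherent_seq A.
Proof.
move=> zalgA cohA; split; first exact: P_projective.
move=> X m [gmodX [fgX _]].
have [F [Fdeg Fspan]] := fin_gen_gen_below zalgA cohA m gmodX fgX.
exists #|fam_idx F|, (fun t => fam_deg F (enum_val t)).
split=> [t|]; first exact: Fdeg.
exists (m + 1) => i im h h_hom.
have i_le_m : i <= m by lia.
have [c hc] := hom_from_P_factor zalgA gmodX h_hom (Fspan i i_le_m (h i (zone A i))).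
exists (fun _ => 1%N), (fun t _ d a => gact (fam_elt F (enum_val t)) a),
  (fun t _ d y => zmul (c (enum_val t)) y).
split=> [t u|t u|d x]; first exact: gact_hom.
  exact: (gact_hom (Pmod_gmod zalgA _)).
rewrite hc; under [RHS]eq_bigr do rewrite big_ord1.
transitivity (\sum_(v in fam_idx F) gact (fam_elt F v) (zmul (c v) x)).
  by apply: eq_bigl => v; rewrite inE.
by rewrite big_enum_val.
Qed.
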